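(* Let $L$ be a finite-dimensional semisimple Leibniz algebra over $\mathbb{C}$, written as $L=(\oplus_{i=1}^m\mathfrak{g}_i)\ltimes(\oplus_{k=1}^n I_k)$, where $\mathfrak{g}_1,\dots,\mathfrak{g}_m$ are simple Lie subalgebras whose direct sum is a subalgebra of $L$ complementary to $I$ and isomorphic to the liezation $\mathfrak{g}_L$, and $I=\oplus_{k=1}^n I_k$ is a decomposition of $I$ into simple $(\oplus_{i=1}^m\mathfrak{g}_i)$-submodules (with respect to the right action $i.g=[i,g]$). Then for all $1\le i\le m$ and $1\le k\le n$, either $[I_k,\mathfrak{g}_i]=I_k$ or $[I_k,\mathfrak{g}_i]=\{0\}$.
   Context: A Leibniz algebra is a vector space $L$ with a bilinear bracket satisfying $[[x,y],z]=[[x,z],y]+[x,[y,z]]$ for all $x,y,z\in L$. The subspace $I=\mathrm{Span}\langle [x,x]\mid x\in L\rangle$ is an ideal with $[L,I]=0$; the quotient $\mathfrak{g}_L=L/I$ is a Lie algebra (the liezation). $L$ is semisimple if $\mathfrak{g}_L$ is a semisimple Lie algebra. In that case $L$ contains a subalgebra isomorphic to $\mathfrak{g}_L$ complementary to $I$, so $L$ admits a decomposition as in the claim; $[I_k,\mathfrak{g}_i]$ denotes the span of brackets $[x,y]$ with $x\in I_k$, $y\in\mathfrak{g}_i$. *)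

From HB Require Import structures.
From mathcomp Require Import all_boot all_order all_algebra.
From mathcomp Require Import complex.
From mathcomp Require Import reals.
Set Implicit Arguments. Unset Strict Implicit. Unset Printing Implicit Defensive.
Import Order.TTheory GRing.Theory Num.Theory.
Local Open Scope ring_scope.

Section LeibnizDefs.
Variables (K : fieldType) (V : vectType K).

Definition spanned_by (P : V -> Prop) (U : {vspace V}) : Prop :=
  (forall v, P v -> v \in U) /\
  (forall W : {vspace V}, (forall v, P v -> v \in W) -> (U <= W)%VS).

Definition bilinear_br (br : V -> V -> V) : Prop :=
  (forall (a : K) x y z, br (a *: x + y) z = a *: br x z + br y z) /\
  (forall (a : K) x y z, br x (a *: y + z) = a *: br x y + br x z).

Definition leibniz_identity (br : V -> V -> V) : Prop :=
  forall x y z, br (br x y) z = br (br x z) y + br x (br y z).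

Definition brackets (br : V -> V -> V) (A B : {vspace V}) : V -> Prop :=
  fun v => exists x y, [/\ x \in A, y \in B & v = br x y].

Definition brsp_is (br : V -> V -> V) (A B U : {vspace V}) : Prop :=
  spanned_by (brackets br A B) U.

Definition subalgebra (br : V -> V -> V) (A : {vspace V}) : Prop :=
  forall x y, x \in A -> y \in A -> br x y \in A.

Definition simple_lie_subalgebra (br : V -> V -> V) (A : {vspace V}) : Prop :=
  [/\ subalgebra br A,
      (forall x, x \in A -> br x x = 0),
      (exists x y, [/\ x \in A, y \in A & br x y != 0]) &
      (forall J : {vspace V}, (J <= A)%VS ->
         (forall x y, x \in J -> y \in A -> br x y \in J /\ br y x \in J) ->
         J = 0%VS \/ J = A)].

Definition right_submodule (br : V -> V -> V) (G M : {vspace V}) : Prop :=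
  forall x y, x \in M -> y \in G -> br x y \in M.

Definition simple_right_module (br : V -> V -> V) (G M : {vspace V}) : Prop :=
  [/\ right_submodule br G M, M != 0%VS &
      forall U : {vspace V}, (U <= M)%VS -> right_submodule br G U ->
        U = 0%VS \/ U = M].

End LeibnizDefs.

From HB Require Import structures.
From mathcomp Require Import all_boot all_order all_algebra.
From mathcomp Require Import complex.
From mathcomp Require Import reals.
From Stdlib Require Import Classical.
Import Order.TTheory GRing.Theory Num.Theory.
Local Open Scope ring_scope.

(* The span U of the brackets [I_k, g_i] lies in I_k, and the Leibniz identity
   [[x,y],z] = [[x,z],y] + [x,[y,z]] shows that it is a right submodule for the
   action of the whole semisimple part: [x,z] stays in I_k, and [y,z] stays in
   g_i because g_i is a subalgebra annihilated by the other g_j.  Simplicity of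
   I_k then forces U = 0 or U = I_k. *)

Section Spans.
Context {K : fieldType} {V : vectType K}.

Lemma spanned_by_exists (P : V -> Prop) : exists U : {vspace V}, spanned_by P U.
Proof.
suff span_below d (U : {vspace V}) :
    (\dim U <= d)%N -> (forall v, P v -> v \in U) -> exists U, spanned_by P U.
  by apply: (span_below (\dim (fullv : {vspace V}))) => // v _; exact: memvf.
elim: d U => [|d IHd] U dimU PU.
  exists U; split=> // W _.
  have /eqP -> : U == 0%VS by rewrite -dimv_eq0 -leqn0.
  exact: sub0v.
have [minU|] :=
  classic (forall W : {vspace V}, (forall v, P v -> v \in W) -> (U <= W)%VS).
  by exists U.
(* Otherwise some W containing P misses part of U, and U :&: W is smaller. *)
move=> /not_all_ex_not[W not_sUW]; have [PW sUW] := imply_to_and _ _ not_sUW.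
apply: (IHd (U :&: W)%VS); last by move=> v Pv; apply/memv_capP; split; auto.
have UW_lt : (\dim (U :&: W) < \dim U)%N.
  rewrite (ltn_leqif (dimv_leqif_sup (capvSl U W))).
  by apply/negP => sUUW; apply: sUW; exact: subv_trans sUUW (capvSr U W).
by rewrite -ltnS (leq_trans UW_lt).
Qed.

Lemma linear_preimv_exists (f : V -> V) (W : {vspace V}) : linear f ->
  exists P : {vspace V}, forall v, (v \in P) = (f v \in W).
Proof.
move=> f_lin.
pose fL : {linear V -> V} := HB.pack f (GRing.isLinear.Build _ _ _ _ f f_lin).
by exists (linfun fL @^-1: W)%VS => v; rewrite -memv_preim lfunE.
Qed.

Lemma spanned_by_linear_sub {P : V -> Prop} {U W : {vspace V}} {f : V -> V} :
  linear f -> spanned_by P U -> (forall v, P v -> f v \in W) ->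
  forall u, u \in U -> f u \in W.
Proof.
move=> f_lin [_ minU] PfW u Uu.
have [Q memQ] := linear_preimv_exists f W f_lin.
by rewrite -memQ; apply: (subvP (minU Q _)) => // v Pv; rewrite memQ PfW.
Qed.

Lemma sumv_linear_sub {I : finType} {g : I -> {vspace V}} {W : {vspace V}}
    {f : V -> V} :
  linear f -> (forall j v, v \in g j -> f v \in W) ->
  forall u, u \in (\sum_j g j)%VS -> f u \in W.
Proof.
move=> f_lin gfW u gu.
have [Q memQ] := linear_preimv_exists f W f_lin.
rewrite -memQ; apply: (subvP _ _ gu).
by apply/subv_sumP => j _; apply/subvP => v gv; rewrite memQ (gfW j).
Qed.

End Spans.

Section RightModules.
Context {K : fieldType} {V : vectType K} {br : V -> V -> V}.
Hypotheses (br_bilinear : bilinear_br br) (br_leibniz : leibniz_identity br).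

Lemma linear_brl (z : V) : linear (fun x => br x z).
Proof. by move=> a x y; case: br_bilinear. Qed.

Lemma linear_brr (y : V) : linear (br y).
Proof. by move=> a x z; case: br_bilinear. Qed.

Lemma sumv_right_submodule {I : finType} {g : I -> {vspace V}} {i : I} :
  subalgebra br (g i) ->
  (forall j x y, i != j -> x \in g i -> y \in g j -> br x y = 0) ->
  right_submodule br (\sum_j g j)%VS (g i).
Proof.
move=> gi_sub g_orth y z gy; apply: sumv_linear_sub (linear_brr y) _ z => j v gv.
case: (eqVneq i j) gv => [<- gv|ij gv]; first exact: gi_sub.
by rewrite (g_orth j y v ij gy gv) mem0v.
Qed.

Lemma brsp_right_submodule {G A B U : {vspace V}} :
  right_submodule br G A -> right_submodule br G B -> brsp_is br A B U ->
  right_submodule br G U.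
Proof.
move=> A_mod B_mod spanU u z Uu Gz; have [brU _] := spanU.
apply: spanned_by_linear_sub (linear_brl z) spanU _ u Uu => _ [x [y [Ax By ->]]].
rewrite br_leibniz; apply: memvD; apply: brU.
  by exists (br x z), y; split => //; exact: A_mod.
by exists x, (br y z); split => //; exact: B_mod.
Qed.

Lemma brsp_subl {G A B U : {vspace V}} :
  right_submodule br G A -> (B <= G)%VS -> brsp_is br A B U -> (U <= A)%VS.
Proof.
move=> A_mod sBG [_ minU]; apply: minU => _ [x [y [Ax By ->]]].
by apply: A_mod => //; exact: subvP sBG y By.
Qed.

Lemma brsp_simple_right_module {G M B U : {vspace V}} :
  simple_right_module br G M -> right_submodule br G B -> (B <= G)%VS ->
  brsp_is br M B U -> U = 0%VS \/ U = M.
Proof.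
move=> [M_mod _ M_simple] B_mod sBG spanU.
apply: M_simple; first exact: brsp_subl M_mod sBG spanU.
exact: brsp_right_submodule M_mod B_mod spanU.
Qed.

End RightModules.

Theorem proposition3p1 (R : realType) (V : vectType R[i]) (br : V -> V -> V)
  (m n : nat) (g : 'I_m -> {vspace V}) (Ik : 'I_n -> {vspace V}) :
  bilinear_br br -> leibniz_identity br ->
  (* I = Span <[x,x]> equals I_1 (+) ... (+) I_n *)
  spanned_by (fun v => exists x, v = br x x) (\sum_(k < n) Ik k)%VS ->
  directv (\sum_(k < n) Ik k)%VS ->
  (* g_1, ..., g_m simple Lie subalgebras, forming a direct sum of Lie algebras *)
  (forall i, simple_lie_subalgebra br (g i)) ->
  directv (\sum_(i < m) g i)%VS ->
  (forall i j x y, i != j -> x \in g i -> y \in g j -> br x y = 0) ->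
  (* the direct sum is a subalgebra complementary to I *)
  subalgebra br (\sum_(i < m) g i)%VS ->
  ((\sum_(i < m) g i) + (\sum_(k < n) Ik k))%VS = fullv ->
  directv ((\sum_(i < m) g i) + (\sum_(k < n) Ik k))%VS ->
  (* each I_k is a simple module for the right action of the sum of the g_i *)
  (forall k, simple_right_module br (\sum_(i < m) g i)%VS (Ik k)) ->
  forall (i : 'I_m) (k : 'I_n),
    brsp_is br (Ik k) (g i) (Ik k) \/ brsp_is br (Ik k) (g i) 0%VS.
Proof.
move=> br_bilinear br_leibniz _ _ g_simple _ g_orth _ _ _ I_simple i k.
have [U spanU] := spanned_by_exists (brackets br (Ik k) (g i)).
have gi_mod : right_submodule br (\sum_(j < m) g j)%VS (g i).
  by apply: sumv_right_submodule _ (g_orth i); case: (g_simple i).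
have gi_G : (g i <= \sum_(j < m) g j)%VS by exact: sumv_sup.
have [U0|UIk] :=
  brsp_simple_right_module br_bilinear br_leibniz (I_simple k) gi_mod gi_G spanU.
- by right; move: spanU; rewrite U0.
- by left; move: spanU; rewrite UIk.
Qed.
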